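(* Let $A,B,C$ be three non-collinear points in the plane such that the angle $\angle BAC$ is not obtuse (i.e. $0<\angle BAC\le \pi/2$). Consider all rectangles $R$ having $A$ as a vertex such that one of the two sides of $R$ not containing $A$ contains $B$ and the other side of $R$ not containing $A$ contains $C$. Among these rectangles, the minimal area is attained by a rectangle one of whose sides is the segment $AB$ or the segment $AC$. *)

From Stdlib Require Import Reals.
Open Scope R_scope.

Definition pt := (R * R)%type.

Definition vsub (P Q : pt) : pt := (fst P - fst Q, snd P - snd Q).
Definition vadd (P Q : pt) : pt := (fst P + fst Q, snd P + snd Q).
Definition dot (u v : pt) : R := fst u * fst v + snd u * snd v.
Definition cross (u v : pt) : R := fst u * snd v - snd u * fst v.
Definition vnorm (u : pt) : R := sqrt (dot u u).

Definition collinear (P Q S : pt) : Prop := cross (vsub Q P) (vsub S P) = 0.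

Definition angle (B A C : pt) : R :=
  acos (dot (vsub B A) (vsub C A) / (vnorm (vsub B A) * vnorm (vsub C A))).

Definition on_seg (X P Q : pt) : Prop :=
  exists t : R, 0 <= t <= 1 /\
    X = (fst P + t * (fst Q - fst P), snd P + t * (snd Q - snd P)).

(* A (non-degenerate) rectangle in the plane, given by its four vertices in
   cyclic order V0 V1 V2 V3, represented by V0 and the two edge vectors
   p = V1 - V0, q = V3 - V0, which are nonzero and orthogonal. *)
Record rect := Rect { rv0 : pt; rp : pt; rq : pt }.

Definition is_rect (R0 : rect) : Prop :=
  rp R0 <> (0, 0) /\ rq R0 <> (0, 0) /\ dot (rp R0) (rq R0) = 0.

Definition V0 (R0 : rect) : pt := rv0 R0.
Definition V1 (R0 : rect) : pt := vadd (rv0 R0) (rp R0).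
Definition V2 (R0 : rect) : pt := vadd (vadd (rv0 R0) (rp R0)) (rq R0).
Definition V3 (R0 : rect) : pt := vadd (rv0 R0) (rq R0).

Definition area (R0 : rect) : R := vnorm (rp R0) * vnorm (rq R0).

Definition same_seg (X Y P Q : pt) : Prop :=
  (X = P /\ Y = Q) \/ (X = Q /\ Y = P).

Definition is_side (R0 : rect) (X Y : pt) : Prop :=
  same_seg X Y (V0 R0) (V1 R0) \/ same_seg X Y (V1 R0) (V2 R0) \/
  same_seg X Y (V2 R0) (V3 R0) \/ same_seg X Y (V3 R0) (V0 R0).

(* Admissible rectangles: A is the vertex V0 (WLOG by relabeling the cyclic
   order); the two sides not containing A are [V1,V2] and [V3,V2]; one of them
   contains B and the other contains C. *)
Definition admissible (A B C : pt) (R0 : rect) : Prop :=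
  is_rect R0 /\ V0 R0 = A /\
  ((on_seg B (V1 R0) (V2 R0) /\ on_seg C (V3 R0) (V2 R0)) \/
   (on_seg C (V1 R0) (V2 R0) /\ on_seg B (V3 R0) (V2 R0))).

(* Write u = B - A and v = C - A. If an admissible rectangle has edge vectors
   p, q, then u = p + s q and v = q + t p with s, t in [0, 1], hence
   cross u v = (1 - s t) cross p q, and its area |p| |q| = |cross p q| is at
   least |cross u v|, twice the area of ABC. Conversely, when the orthogonal
   projection of C onto line AB falls on the segment AB, the rectangle with
   side AB through C has area exactly |cross u v|. Since angle BAC is not
   obtuse, 0 <= u.v, and by Cauchy-Schwarz u.v <= |u|^2 or u.v <= |v|^2, so
   this happens for AB or for AC. *)

From Stdlib Require Import Reals Lra.
Open Scope R_scope.

Lemma dot_comm (u v : pt) : dot u v = dot v u.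
Proof. unfold dot; ring. Qed.

Lemma cross_comm (u v : pt) : cross v u = - cross u v.
Proof. unfold cross; ring. Qed.

Lemma dot_self_ge0 (u : pt) : 0 <= dot u u.
Proof. destruct u as [u1 u2]; unfold dot; simpl; nra. Qed.

Lemma cross_neq0_dot_self_gt0 (u v : pt) : cross u v <> 0 -> 0 < dot u u.
Proof.
  destruct u as [u1 u2], v as [v1 v2]; unfold cross, dot; simpl; intros hc.
  destruct (Rle_lt_dec (u1 * u1 + u2 * u2) 0) as [h | h]; [exfalso | exact h].
  assert (u1 = 0) by nra; assert (u2 = 0) by nra; subst; apply hc; ring.
Qed.

Lemma lagrange_identity (u v : pt) :
  dot u u * dot v v = cross u v * cross u v + dot u v * dot u v.
Proof. unfold dot, cross; ring. Qed.

Lemma dot_le_dot_self (u v : pt) :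
  0 <= dot u v -> dot u v <= dot u u \/ dot u v <= dot v v.
Proof.
  intros hd.
  pose proof (lagrange_identity u v); pose proof (dot_self_ge0 u);
    pose proof (dot_self_ge0 v).
  destruct (Rle_lt_dec (dot u v) (dot u u)); [left; assumption | right].
  nra.
Qed.

Lemma vnorm_mul_orthogonal (u v : pt) :
  dot u v = 0 -> vnorm u * vnorm v = Rabs (cross u v).
Proof.
  intros hd; unfold vnorm.
  rewrite <- sqrt_mult_alt by apply dot_self_ge0.
  rewrite lagrange_identity, hd, Rmult_0_l, Rplus_0_r.
  apply sqrt_Rsqr_abs.
Qed.

Lemma area_rect (R0 : rect) :
  is_rect R0 -> area R0 = Rabs (cross (rp R0) (rq R0)).
Proof. intros (_ & _ & hd); exact (vnorm_mul_orthogonal _ _ hd). Qed.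

Lemma area_admissible_ge (A B C : pt) (R1 : rect) :
  admissible A B C R1 -> Rabs (cross (vsub B A) (vsub C A)) <= area R1.
Proof.
  intros (hr & h0 & hBC); rewrite (area_rect _ hr).
  destruct R1 as [a [p1 p2] [q1 q2]]; unfold V0 in h0; simpl in h0 |- *; subst a.
  assert (scale_le : forall s t, 0 <= s <= 1 -> 0 <= t <= 1 ->
            Rabs ((1 - s * t) * cross (p1, p2) (q1, q2)) <= Rabs (cross (p1, p2) (q1, q2))).
  { intros s t hs ht; rewrite Rabs_mult.
    rewrite <- (Rmult_1_l (Rabs (cross _ _))) at 2.
    apply Rmult_le_compat_r; [apply Rabs_pos |].
    apply Rabs_le; nra. }
  destruct A as [a1 a2]; unfold on_seg, V1, V2, V3, vadd in hBC; simpl in hBC.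
  destruct hBC as [[[s [hs ->]] [t [ht ->]]] | [[s [hs ->]] [t [ht ->]]]].
  - replace (cross _ _) with ((1 - s * t) * cross (p1, p2) (q1, q2))
      by (unfold cross, vsub; simpl; ring).
    apply scale_le; assumption.
  - replace (cross _ _) with (- ((1 - s * t) * cross (p1, p2) (q1, q2)))
      by (unfold cross, vsub; simpl; ring).
    rewrite Rabs_Ropp; apply scale_le; assumption.
Qed.

Lemma on_seg_l (P Q : pt) : on_seg P P Q.
Proof. exists 0; split; [lra |]; destruct P; simpl; f_equal; ring. Qed.

(* The rectangle spanned by u = X - A and a multiple of its rotation by a
   right angle; Y lies on the opposite side at parameter t = u.v / |u|^2. *)
Lemma rect_on_segment (A X Y : pt) :
  cross (vsub X A) (vsub Y A) <> 0 ->
  0 <= dot (vsub X A) (vsub Y A) <= dot (vsub X A) (vsub X A) ->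
  exists R0 : rect, is_rect R0 /\ V0 R0 = A /\ V1 R0 = X /\
    on_seg Y (V3 R0) (V2 R0) /\
    area R0 = Rabs (cross (vsub X A) (vsub Y A)).
Proof.
  intros hc hd; pose proof (cross_neq0_dot_self_gt0 _ _ hc) as hN.
  revert hc hd hN.
  destruct A as [a1 a2], X as [x1 x2], Y as [y1 y2]; unfold dot, cross, vsub; simpl.
  set (u1 := x1 - a1); set (u2 := x2 - a2); set (v1 := y1 - a1); set (v2 := y2 - a2).
  intros hc hd hN.
  set (N := u1 * u1 + u2 * u2) in *; set (k := (u1 * v2 - u2 * v1) / N).
  assert (hk : k <> 0).
  { assert (k * N = u1 * v2 - u2 * v1) by (unfold k; field; lra).
    intros e; rewrite e in *; lra. }
  assert (hu : (u1, u2) <> (0, 0)) by (intros e; injection e; intros; subst N; nra).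
  assert (hR : is_rect (Rect (a1, a2) (u1, u2) (- k * u2, k * u1))).
  { split; [exact hu | split; [| unfold dot; simpl; ring]].
    intros e; injection e; intros e1 e2; apply hu.
    apply Rmult_integral in e1, e2; f_equal; lra. }
  exists (Rect (a1, a2) (u1, u2) (- k * u2, k * u1)).
  split; [exact hR | split; [reflexivity | split; [| split]]].
  - unfold V1, vadd; simpl; f_equal; unfold u1, u2; ring.
  - exists ((u1 * v1 + u2 * v2) / N); split.
    + assert ((u1 * v1 + u2 * v2) / N * N = u1 * v1 + u2 * v2) by (field; lra).
      split; nra.
    + unfold V2, V3, vadd; simpl.
      replace y1 with (a1 + v1) by (unfold v1; ring).
      replace y2 with (a2 + v2) by (unfold v2; ring).
      unfold k, N in *; f_equal; field; lra.
  - rewrite (area_rect _ hR); unfold cross; simpl; f_equal.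
    unfold k, N in *; field; lra.
Qed.

Lemma admissible_sym (A B C : pt) (R0 : rect) :
  admissible A B C R0 -> admissible A C B R0.
Proof. intros (hr & h0 & hBC); split; [exact hr | split; [exact h0 | tauto]]. Qed.

Lemma min_rect_on_side (A B C : pt) :
  cross (vsub B A) (vsub C A) <> 0 ->
  0 <= dot (vsub B A) (vsub C A) <= dot (vsub B A) (vsub B A) ->
  exists R0 : rect, admissible A B C R0 /\ is_side R0 A B /\
    (forall R1 : rect, admissible A B C R1 -> area R0 <= area R1).
Proof.
  intros hc hd.
  destruct (rect_on_segment A B C hc hd) as (R0 & hr & h0 & h1 & hC & ha).
  exists R0; split; [| split].
  - split; [exact hr | split; [exact h0 |]].
    left; split; [rewrite <- h1; apply on_seg_l | exact hC].
  - left; left; split; symmetry; assumption.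
  - intros R1 hR1; rewrite ha; exact (area_admissible_ge _ _ _ _ hR1).
Qed.

Lemma acos_lt_PI2 (x : R) : 0 < x -> acos x < PI / 2.
Proof. intros hx; rewrite acos_atan by exact hx; apply atan_bound. Qed.

Lemma acos_le_PI2_ge0 (x : R) : acos x <= PI / 2 -> 0 <= x.
Proof.
  intros h; destruct (Rle_lt_dec 0 x) as [hx | hx]; [exact hx |].
  pose proof (acos_lt_PI2 (- x) ltac:(lra)); rewrite acos_opp in *; lra.
Qed.

Lemma angle_le_PI2_dot_ge0 (A B C : pt) :
  0 < dot (vsub B A) (vsub B A) -> 0 < dot (vsub C A) (vsub C A) ->
  angle B A C <= PI / 2 -> 0 <= dot (vsub B A) (vsub C A).
Proof.
  intros hu hv ha; apply acos_le_PI2_ge0 in ha.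
  assert (hm : 0 < vnorm (vsub B A) * vnorm (vsub C A))
    by (apply Rmult_lt_0_compat; apply sqrt_lt_R0; assumption).
  set (m := vnorm (vsub B A) * vnorm (vsub C A)) in *.
  replace (dot _ _) with (dot (vsub B A) (vsub C A) / m * m) by (field; lra).
  apply Rmult_le_pos; lra.
Qed.

Theorem lemma1 (A B C : pt) :
  ~ collinear A B C ->
  0 < angle B A C <= PI / 2 ->
  exists R0 : rect,
    admissible A B C R0 /\
    (is_side R0 A B \/ is_side R0 A C) /\
    (forall R1 : rect, admissible A B C R1 -> area R0 <= area R1).
Proof.
  unfold collinear; intros hc [_ ha].
  assert (hc' : cross (vsub C A) (vsub B A) <> 0)
    by (rewrite cross_comm; contradict hc; lra).
  pose proof (cross_neq0_dot_self_gt0 _ _ hc) as hu.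
  pose proof (cross_neq0_dot_self_gt0 _ _ hc') as hv.
  pose proof (angle_le_PI2_dot_ge0 A B C hu hv ha) as hd.
  destruct (dot_le_dot_self _ _ hd) as [hB | hC].
  - destruct (min_rect_on_side A B C hc (conj hd hB)) as (R0 & hR0 & hs & hmin).
    exists R0; auto.
  - rewrite dot_comm in hd, hC.
    destruct (min_rect_on_side A C B hc' (conj hd hC)) as (R0 & hR0 & hs & hmin).
    exists R0; split; [| split]; auto using admissible_sym.
Qed.
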